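(* Let $\mathcal{F} \subseteq \{0,1\}^n$ be a feasible set, let $c \in \mathbb{Z}^n$, and let $\ell \in \mathbb{Z}_+$. Let $c' \in \mathbb{Z}^n$ be the $\ell$-bit rounding of $c$, and let $x^\star \in \mathcal{F}$ be an optimal solution of $\max\{(c')^\top x : x \in \mathcal{F}\}$. Then $x^\star$ is $\frac{1}{2^{\ell-1}}$-optimal with respect to the original objective $c$ for the problem $\max\{c^\top x : x \in \mathcal{F}\}$.
   Context: Consider the binary program $\max\{c^\top x : x \in \mathcal{F}\}$ with $\mathcal{F} \subseteq \{0,1\}^n$ and $c = (c_1,\dots,c_n)^\top \in \mathbb{Z}^n$. For each $i \in [n] = \{1,\dots,n\}$, write $c_i = \mathrm{sgn}(c_i) \sum_{j=0}^{k_i-1} c_{ij} 2^j$, where $\mathrm{sgn}(c_i) \in \{0,\pm 1\}$ is the sign of $c_i$, $k_i = \lceil \log_2(|c_i|+1) \rceil$, and $c_{ij} \in \{0,1\}$ are the binary digits of $|c_i|$. For $\ell \in \mathbb{Z}_+$, the $\ell$-bit rounding of $c_i$ is $c'_i = \mathrm{sgn}(c_i) \sum_{j = k_i-\ell}^{k_i-1} c_{ij} 2^j$, i.e., the lowest $k_i - \ell$ bits of $|c_i|$ are set to zero and the top $\ell$ bits are kept (the sum starts at $j = \max(0, k_i-\ell)$; if $\ell \ge k_i$, then $c'_i = c_i$). The $\ell$-bit rounding of $c$ is $c' = (c'_1,\dots,c'_n)^\top$. For $\varepsilon \ge 0$, a feasible point $x^\star \in \mathcal{F}$ is called $\varepsilon$-optimal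 for the objective function $c$ if there exists $\tilde c \in \mathbb{R}^n$ such that, for all $j \in [n]$, $(1-\varepsilon)c_j \le \tilde c_j \le (1+\varepsilon)c_j$ if $c_j \ge 0$, and $(1+\varepsilon)c_j \le \tilde c_j \le (1-\varepsilon)c_j$ if $c_j < 0$, and $x^\star$ is an optimal solution of $\max\{\tilde c^\top x : x \in \mathcal{F}\}$. *)

From HB Require Import structures.
From mathcomp Require Import all_boot all_order all_algebra.
Set Implicit Arguments. Unset Strict Implicit. Unset Printing Implicit Defensive.
Import Order.TTheory GRing.Theory Num.Theory.
Local Open Scope ring_scope.

(* k = ceil(log2(|c|+1)) = smallest e with |c|+1 <= 2^e (up_log). *)
Definition nbits (c : int) : nat := up_log 2 (`|c|%N + 1).

Definition bitc (c : int) (j : nat) : nat := (`|c|%N %/ 2 ^ j) %% 2.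

Definition round_bits (l : nat) (c : int) : int :=
  sgz c * (\sum_(nbits c - l <= j < nbits c) bitc c j * 2 ^ j)%N%:Z.

Definition round_vec (n l : nat) (c : 'I_n -> int) : 'I_n -> int :=
  fun i => round_bits l (c i).

Definition obj (R : numDomainType) (n : nat) (c : 'I_n -> R)
  (x : {ffun 'I_n -> bool}) : R := \sum_(i < n) c i * (x i)%:R.

Definition is_optimal (R : numDomainType) (n : nat)
  (F : {set {ffun 'I_n -> bool}}) (c : 'I_n -> R) (x : {ffun 'I_n -> bool}) :=
  x \in F /\ forall y, y \in F -> obj c y <= obj c x.

Definition eps_optimal (R : realFieldType) (n : nat)
  (F : {set {ffun 'I_n -> bool}}) (c : 'I_n -> int) (eps : R)
  (x : {ffun 'I_n -> bool}) :=
  x \in F /\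
  exists ct : 'I_n -> R,
    (forall j : 'I_n,
       if (0 <= c j)%R
       then (1 - eps) * (c j)%:~R <= ct j <= (1 + eps) * (c j)%:~R
       else (1 + eps) * (c j)%:~R <= ct j <= (1 - eps) * (c j)%:~R)
    /\ is_optimal F ct x.

From mathcomp Require Import all_boot all_order all_algebra.
From mathcomp Require Import ring lra.
Import Order.TTheory GRing.Theory Num.Theory.

(* Let N = |c_i| have k bits. The l-bit rounding replaces N by N rounded down
   to a multiple of 2^(k-l), so the error N mod 2^(k-l) is below 2^(k-l),
   whereas N >= 2^(k-1); hence |c'_i - c_i| <= 2^(1-l) |c_i|. The interval in
   the definition of eps-optimality says exactly |c~_i - c_i| <= eps |c_i|, so
   c~ := c' itself, for which x* is optimal by hypothesis, is a witness. *)

Lemma sum_bits_trunc (N : nat) {m k : nat} : m <= k ->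
  \sum_(m <= j < k) (N %/ 2 ^ j %% 2) * 2 ^ j + N %/ 2 ^ k * 2 ^ k
  = N %/ 2 ^ m * 2 ^ m.
Proof.
elim: k => [|k IHk]; first by rewrite leqn0 => /eqP ->; rewrite big_geq.
rewrite leq_eqVlt => /predU1P[<-|]; first by rewrite big_geq.
rewrite ltnS => le_mk; rewrite big_nat_recr //= -IHk // -addnA; congr (_ + _).
rewrite expnSr divnMA [in RHS](divn_eq (N %/ 2 ^ k) 2) mulnDl; ring.
Qed.

Lemma abs_lt_exp2_nbits (c : int) : `|c| < 2 ^ nbits c.
Proof. by rewrite -addn1 up_logP. Qed.

Lemma exp2_nbits_le_abs (c : int) : 0 < nbits c -> 2 ^ (nbits c).-1 <= `|c|.
Proof.
rewrite /nbits up_log_gt0 /= => gt1.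
by have /andP[+ _] := up_log_bounds (isT : 1 < 2) gt1; rewrite addn1 ltnS.
Qed.

Lemma round_bits_dist (l : nat) (c : int) :
  `|c - round_bits l c|%N = `|c| %% 2 ^ (nbits c - l).
Proof.
set m := nbits c - l.
have trunc : \sum_(m <= j < nbits c) bitc c j * 2 ^ j = `|c| %/ 2 ^ m * 2 ^ m.
  have := sum_bits_trunc `|c| (leq_subr l (nbits c)).
  by rewrite divn_small ?abs_lt_exp2_nbits // mul0n addn0.
rewrite /round_bits trunc {1}[c]intEsg -mulrBr {1}(divn_eq `|c| (2 ^ m)).
rewrite PoszD addrC addKr abszM.
by clearbody m; case: c {trunc} => [[|k]|k]; rewrite /= ?mod0n ?mul1n.
Qed.

Lemma modn_exp2_sub_le (N k l : nat) : (0 < k -> 2 ^ k.-1 <= N) ->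
  N %% 2 ^ (k - l) * 2 ^ l <= 2 * N.
Proof.
move=> N_ge; case: (leqP k l) => [le_kl|lt_lk].
  by move: le_kl; rewrite -subn_eq0 => /eqP ->; rewrite modn1 mul0n.
have k_gt0 : 0 < k by apply: leq_ltn_trans lt_lk.
apply: leq_trans (_ : 2 ^ (k - l) * 2 ^ l <= _).
  by rewrite leq_mul2r ltnW ?ltn_mod ?expn_gt0 ?orbT.
rewrite -expnD subnK; last exact: ltnW.
by rewrite -[in leqLHS](prednK k_gt0) expnS leq_mul2l N_ge.
Qed.

Lemma round_bits_dist_le (l : nat) (c : int) :
  `|c - round_bits l c|%N * 2 ^ l <= 2 * `|c|.
Proof. by rewrite round_bits_dist modn_exp2_sub_le // => /exp2_nbits_le_abs. Qed.

Local Open Scope ring_scope.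

Lemma rel_interval_norm (R : realDomainType) (eps c y : R) :
  (if 0 <= c then (1 - eps) * c <= y <= (1 + eps) * c
   else (1 + eps) * c <= y <= (1 - eps) * c) = (`|y - c| <= eps * `|c|).
Proof.
rewrite ler_norml; case: leP => c0; [rewrite ger0_norm|rewrite ltr0_norm] => //;
  by apply/andP/andP => -[? ?]; split; lra.
Qed.

Theorem lemma1 (R : realFieldType) (n : nat) (F : {set {ffun 'I_n -> bool}})
  (c : 'I_n -> int) (l : nat) (xstar : {ffun 'I_n -> bool}) :
  is_optimal F (fun i => ((round_vec l c i)%:~R : R)) xstar ->
  eps_optimal F c (2 / 2 ^+ l : R) xstar.
Proof.
move=> opt; split; first by case: opt.
exists (fun i => (round_vec l c i)%:~R); split=> // j.
rewrite -(ler0z R) rel_interval_norm -rmorphB -!intr_norm distrC -!abszE.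
rewrite mulrAC ler_pdivlMr ?exprn_gt0 // -!natrX -!natrM ler_nat.
exact: round_bits_dist_le.
Qed.
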